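(* Let $(X,\beta,m)$ be a non-atomic standard probability space and $\tau$ an ergodic invertible measure-preserving map of $X$. Let $(\epsilon_n)_{n\ge1}$ be a sequence with $0<\epsilon_n<1/2$ for all $n$ and $\epsilon_n$ decreasing to $0$. Then there exists $E\in\beta$ with $m(E)>0$ such that $$m\Big(\bigcup_{k=1}^n\tau^k(E)\Big)\le1-\epsilon_n\quad\text{for all }n\ge1.$$ *)

From HB Require Import structures.
From mathcomp Require Import all_boot all_order all_algebra.
From mathcomp Require Import all_classical all_reals all_analysis.
Set Implicit Arguments. Unset Strict Implicit. Unset Printing Implicit Defensive.
Import Order.TTheory GRing.Theory Num.Theory.
Local Open Scope classical_set_scope.
Local Open Scope ring_scope.

Section Defs.
Context {R : realType} {d : measure_display} {X : measurableType d}.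

Definition is_metric (dist : X -> X -> R) : Prop :=
  [/\ forall x y, 0 <= dist x y,
      forall x y, dist x y = 0 <-> x = y,
      forall x y, dist x y = dist y x &
      forall x y z, dist x z <= dist x y + dist y z].

Definition metric_open (dist : X -> X -> R) (U : set X) : Prop :=
  forall x, U x -> exists2 r : R, 0 < r & [set y | dist x y < r] `<=` U.

Definition metric_complete (dist : X -> X -> R) : Prop :=
  forall u : nat -> X,
    (forall e : R, 0 < e -> exists N, forall p q, (N <= p)%N -> (N <= q)%N ->
        dist (u p) (u q) < e) ->
    exists l, forall e : R, 0 < e -> exists N, forall p, (N <= p)%N -> dist (u p) l < e.

Definition metric_separable (dist : X -> X -> R) : Prop :=
  exists D : set X, countable D /\
    forall x (e : R), 0 < e -> exists2 y, D y & dist x y < e.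

Definition standard_borel : Prop :=
  exists dist : X -> X -> R,
    [/\ is_metric dist, metric_complete dist, metric_separable dist &
        forall A : set X, measurable A <-> <<s metric_open dist >> A].

Definition nonatomic (m : set X -> \bar R) : Prop :=
  forall A, measurable A -> (0 < m A)%E ->
    exists B, [/\ measurable B, B `<=` A, (0 < m B)%E & (m B < m A)%E].

Definition invertible_mp (m : set X -> \bar R) (tau : X -> X) : Prop :=
  exists sigma : X -> X,
    [/\ measurable_fun setT tau, measurable_fun setT sigma,
        cancel tau sigma, cancel sigma tau &
        forall A, measurable A -> m (tau @^-1` A) = m A].

Definition ergodic (m : set X -> \bar R) (tau : X -> X) : Prop :=
  forall A, measurable A -> tau @^-1` A = A -> m A = 0%E \/ m A = 1%E.

End Defs.

From HB Require Import structures.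
From mathcomp Require Import all_boot all_order all_algebra.
From mathcomp Require Import all_classical all_reals all_analysis.
From mathcomp Require Import ring lra.
Import Order.TTheory GRing.Theory Num.Theory.
Local Open Scope classical_set_scope.
Local Open Scope ring_scope.

(* E is the complement of the bottom parts of a sequence of Rokhlin towers.
   Fix p > 3 with eps_1 <= (p - 3) / 2p.  Ergodicity and non-atomicity give,
   for each i, a base B_i whose images tau^j B_i, j < N_i = p 2^(i+1) M_i, are
   disjoint and cover X up to measure 1/p.  The lowest (p - 1) M_i levels have
   measure at most (1 - 1/p) 2^-(i+1), so removing all of them leaves a set E
   of measure at least 1/p.  For 1 <= k <= n < M_i, each level tau^j B_i with
   n <= j < (p - 1) M_i is the tau^k-image of a removed level, hence misses
   tau^k(E); these levels have total measure at least (p - 3) / (p 2^(i+1)),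
   which dominates eps_n for the first i with n < M_i once the thresholds M_i
   are chosen using eps_n -> 0. *)

Section IterCancel.
Context {T : Type} {f g : T -> T} (fK : cancel f g).

Lemma can_iter n : cancel (iter n f) (iter n g).
Proof. by elim: n => // n IH x; rewrite iterSr /= fK IH. Qed.

Lemma iter_can_le j k x : (j <= k)%N -> iter j g (iter k f x) = iter (k - j) f x.
Proof. by move=> jk; rewrite -{1}(subnKC jk) iterD can_iter. Qed.

Lemma iter_can_ge j k x : (k <= j)%N -> iter j g (iter k f x) = iter (j - k) g x.
Proof. by move=> kj; rewrite -{1}(subnK kj) iterD can_iter. Qed.

End IterCancel.

Section RealProbability.
Context {R : realType} {d : measure_display} {X : measurableType d}
  (m : probability X R).

Definition pr (A : set X) : R := fine (m A).

Lemma prE (A : set X) : measurable A -> m A = (pr A)%:E.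
Proof. by move=> mA; rewrite /pr fineK// fin_num_measure. Qed.

Lemma pr_ge0 (A : set X) : 0 <= pr A.
Proof. by rewrite /pr fine_ge0// measure_ge0. Qed.

Lemma pr_le1 (A : set X) : measurable A -> pr A <= 1.
Proof. by move=> mA; rewrite -lee_fin -prE// probability_le1. Qed.

Lemma prT : pr setT = 1.
Proof. by rewrite /pr probability_setT. Qed.

Lemma le_pr (A B : set X) : measurable A -> measurable B -> A `<=` B -> pr A <= pr B.
Proof. by move=> mA mB AB; rewrite -lee_fin -!prE// le_measure// inE. Qed.

Lemma prU2 (A B : set X) : measurable A -> measurable B -> pr (A `|` B) <= pr A + pr B.
Proof.
move=> mA mB; rewrite -lee_fin EFinD -(prE _ mA) -(prE _ mB) -prE.
  exact: measureU2.
exact: measurableU.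
Qed.

Lemma prD (A B : set X) : measurable A -> measurable B -> B `<=` A ->
  pr (A `\` B) = pr A - pr B.
Proof.
move=> mA mB BA; apply: EFin_inj; rewrite EFinB -(prE _ mA) -(prE _ mB) -prE.
  by rewrite measureD ?setIidr// ltey_eq fin_num_measure.
exact: measurableD.
Qed.

Lemma pr_bigcup_ord_le (F : nat -> set X) n : (forall i, measurable (F i)) ->
  pr (\bigcup_(i < n) F i) <= \sum_(i < n) pr (F i).
Proof.
move=> mF; rewrite -lee_fin -sumEFin -prE; last exact: bigcup_measurable.
under eq_bigr do rewrite -prE//.
by apply: content_subadditive => //; [exact: bigcup_measurable | rewrite bigcup_mkord].
Qed.

Lemma pr_bigcup_ord (F : nat -> set X) n : (forall i, measurable (F i)) ->
  trivIset `I_n F -> pr (\bigcup_(i < n) F i) = \sum_(i < n) pr (F i).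
Proof.
move=> mF tF; apply: EFin_inj; rewrite -sumEFin -prE; last exact: bigcup_measurable.
rewrite measure_fin_bigcup// -fsbig_ord; apply: eq_bigr => i _; exact: prE.
Qed.

Lemma nonatomic_halve : nonatomic m -> forall A : set X, measurable A -> 0 < pr A ->
  exists B, [/\ measurable B, 0 < pr B & 2 * pr B <= pr A].
Proof.
move=> na A mA A0; have [|B [mB BA]] := na A mA; first by rewrite prE// lte_fin.
rewrite !prE// !lte_fin => B0 BltA.
have [Bh|Bh] := lerP (2 * pr B) (pr A); first by exists B.
by exists (A `\` B); split; [exact: measurableD | rewrite prD//; lra ..].
Qed.

Lemma nonatomic_small_set : nonatomic m -> forall w, 0 < w ->
  exists W, [/\ measurable W, 0 < pr W & pr W <= w].
Proof.
move=> na w w0.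
have small k : exists A, [/\ measurable A, 0 < pr A & (2 ^ k)%:R * pr A <= 1].
  elim: k => [|k [A [mA A0 Ak]]]; first by exists setT; rewrite prT mul1r ltr01.
  have [B [mB B0 BA]] := nonatomic_halve na _ mA A0.
  have : 0 <= (2 ^ k)%:R :> R by [].
  by exists B; split => //; rewrite expnS natrM; nra.
have [W [mW W0 Wk]] := small (Num.truncn w^-1).
exists W; split => //.
have w_small : w^-1 < (2 ^ Num.truncn w^-1)%:R.
  by rewrite (lt_le_trans (truncnS_gt _))// ler_nat ltn_expl.
rewrite -(@ler_pM2l _ w^-1) ?invr_gt0// mulVf ?gt_eqF// (le_trans _ Wk)//.
by rewrite ler_wpM2r ?pr_ge0// ltW.
Qed.

End RealProbability.

Section InvertibleMeasurePreserving.
Context {R : realType} {d : measure_display} {X : measurableType d}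
  (m : probability X R) (tau sigma : X -> X).
Hypotheses (mtau : measurable_fun setT tau) (msigma : measurable_fun setT sigma)
  (tauK : cancel tau sigma) (sigmaK : cancel sigma tau)
  (tau_mp : forall A, measurable A -> m (tau @^-1` A) = m A).

(* [shift n A] is the image of [A] under tau^n, written as a preimage under
   sigma^n so that measurability and measure preservation are inherited. *)
Definition shift n (A : set X) := iter n sigma @^-1` A.

Lemma image_iter n (A : set X) : iter n tau @` A = shift n A.
Proof.
apply/seteqP; split => [_ [x Ax <-]|x Ax]; first by rewrite /shift /= (can_iter tauK).
by exists (iter n sigma x) => //; rewrite (can_iter sigmaK).
Qed.

Lemma measurable_preimage_iter (f : X -> X) n (A : set X) : measurable_fun setT f ->
  measurable A -> measurable (iter n f @^-1` A).
Proof.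
move=> mf; elim: n A => // n IH A mA.
by rewrite iterfSr comp_preimage -[_ @^-1` _]setTI; apply: mf => //; exact: IH.
Qed.

Lemma measurable_shift n (A : set X) : measurable A -> measurable (shift n A).
Proof. exact: measurable_preimage_iter. Qed.

Lemma measure_preimage_iter (f : X -> X) n (A : set X) : measurable_fun setT f ->
  (forall B, measurable B -> m (f @^-1` B) = m B) ->
  measurable A -> m (iter n f @^-1` A) = m A.
Proof.
move=> mf f_mp; elim: n A => // n IH A mA.
by rewrite iterfSr comp_preimage f_mp ?IH//; exact: measurable_preimage_iter.
Qed.

Lemma measure_preimage_sigma (A : set X) : measurable A -> m (sigma @^-1` A) = m A.
Proof.
move=> mA; rewrite -tau_mp; last by rewrite -[_ @^-1` _]setTI; exact: msigma.
by congr (m _); apply/seteqP; split => x /=; rewrite tauK.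
Qed.

Lemma pr_shift n (A : set X) : measurable A -> pr m (shift n A) = pr m A.
Proof.
by move=> mA; rewrite /pr measure_preimage_iter//; exact: measure_preimage_sigma.
Qed.

Lemma pr_preimage_iter n (A : set X) : measurable A ->
  pr m (iter n tau @^-1` A) = pr m A.
Proof. by move=> mA; rewrite /pr measure_preimage_iter. Qed.

Lemma ergodic_sweepout (W : set X) : ergodic m tau -> measurable W -> 0 < pr m W ->
  pr m (\bigcup_j shift j W) = 1.
Proof.
move=> erg mW W0; set U := \bigcup_j shift j W.
have mU : measurable U by apply: bigcupT_measurable => j; exact: measurable_shift.
have U_tau : U `<=` tau @^-1` U.
  by move=> x [j _ Wx]; exists j.+1 => //; rewrite /shift /= -iterS iterSr tauK.
have U_iter n : U `<=` iter n tau @^-1` U by elim: n => // n IH x /IH /U_tau.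
have mUn n : measurable (iter n tau @^-1` U) by exact: measurable_preimage_iter.
(* V is tau-invariant, hence of full measure, and V minus U is null because
   U is contained in each tau^-n(U), which has the same measure. *)
set V := \bigcup_n iter n tau @^-1` U.
have mV : measurable V by exact: bigcupT_measurable.
have V_inv : tau @^-1` V = V.
  apply/seteqP; split => x [n _ Ux]; first by exists n.+1 => //=; rewrite -iterS iterSr.
  by exists n => //=; rewrite -iterSr iterS; exact: U_tau.
have V1 : pr m V = 1.
  have WV : pr m W <= pr m V.
    by apply: le_pr => // x Wx; exists 0%N => //; exists 0%N.
  by case: (erg V mV V_inv) => hV; move: W0 WV; rewrite /pr hV /=; lra.
have UV : U `<=` V by move=> x Ux; exists 0%N.
have null_diff n : m (iter n tau @^-1` U `\` U) = 0%E.
  rewrite prE; last exact: measurableD.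
  by rewrite (prD m _ _ (mUn n) mU (U_iter n)) pr_preimage_iter// subrr.
have cover : V `\` U `<=` \bigcup_n (iter n tau @^-1` U `\` U).
  by move=> x [[n _ Ux] nUx]; exists n.
have mD n : measurable (iter n tau @^-1` U `\` U) by exact: measurableD.
have : pr m (V `\` U) <= 0.
  rewrite -lee_fin -prE; last exact: measurableD.
  apply: le_trans (measure_sigma_subadditive m mD (measurableD mV mU) cover) _.
  by rewrite eseries0// => n _ _; exact: null_diff.
by rewrite (prD m _ _ mV mU UV) V1; have := pr_le1 m _ mU; lra.
Qed.

Definition tower (B : set X) N := measurable B /\ trivIset `I_N (shift^~ B).

Definition levels (B : set X) s L := \bigcup_(j < L) shift (j + s) B.

Lemma measurable_levels (B : set X) s L : measurable B -> measurable (levels B s L).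
Proof. by move=> mB; apply: bigcup_measurable => j _; exact: measurable_shift. Qed.

Lemma pr_levels {B : set X} {N} s L : tower B N -> (L + s <= N)%N ->
  pr m (levels B s L) = L%:R * pr m B.
Proof.
move=> [mB tB] LsN; rewrite pr_bigcup_ord => [|j|i j /= iL jL ij].
- under eq_bigr do rewrite pr_shift//.
  by rewrite sumr_const card_ord mulr_natl.
- exact: measurable_shift.
- by apply: (@addIn s); apply: tB ij => /=; rewrite (leq_trans _ LsN)// ltn_add2r.
Qed.

Definition first_entrance (W : set X) n :=
  shift n W `&` \bigcap_(j in `I_n) ~` shift j W.

Lemma measurable_first_entrance (W : set X) n :
  measurable W -> measurable (first_entrance W n).
Proof.
move=> mW; apply: measurableI; first exact: measurable_shift.
by apply: bigcap_measurableType => j _; apply: measurableC; exact: measurable_shift.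
Qed.

Lemma first_entrance_uniq {W : set X} {a b x} :
  first_entrance W a x -> first_entrance W b x -> a = b.
Proof.
wlog ab : a b / (a <= b)%N => [hw|].
  by case: (leqP a b) => [/hw//|/ltnW/hw h Wa Wb]; rewrite (h Wb Wa).
move=> [Wa _] [_ Hb]; apply/eqP; rewrite eqn_leq ab leqNgt.
by apply/negP => /Hb; apply.
Qed.

Lemma exists_first_entrance {W : set X} {j x} : shift j W x ->
  exists n, first_entrance W n x.
Proof.
move=> Wj; have [|n /asboolP Wn nmin] := @ex_minnP (fun n => `[< shift n W x >]).
  by exists j; exact/asboolP.
exists n; split => // i /= ilt Wi.
by have := nmin i (asboolT Wi); rewrite leqNgt ilt.
Qed.

Lemma first_entrance_sigma (W : set X) n r x : (r <= n)%N ->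
  first_entrance W n x -> first_entrance W (n - r) (iter r sigma x).
Proof.
move=> rn [Wn Hn]; split; first by rewrite /shift /= -iterD subnK.
move=> j /= jnr; rewrite /shift /= -iterD; apply: Hn => /=.
by rewrite addnC -ltn_subRL.
Qed.

Lemma first_entrance_tau (W : set X) n k y :
  first_entrance W n y -> (forall i, (0 < i <= k)%N -> ~ W (iter i tau y)) ->
  first_entrance W (n + k) (iter k tau y).
Proof.
move=> [Wn Hn] Hk; split.
  by rewrite /shift /= (iter_can_ge tauK _ _ _ (leq_addl n k)) addnK.
move=> j /= jnk; rewrite /shift /=; case: (ltnP j k) => jk.
  rewrite (iter_can_le tauK _ _ _ (ltnW jk)); apply: Hk.
  by rewrite subn_gt0 jk leq_subr.
rewrite (iter_can_ge tauK _ _ _ jk); apply: Hn => /=.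
by rewrite ltn_subLR// addnC.
Qed.

(* Rokhlin's construction: cutting every sigma-orbit at the first entrances
   into [W] at times divisible by [N] gives disjoint levels; discarding points
   that meet [W] within [N] tau-steps keeps them disjoint, at a cost of
   measure at most [N * m W]. *)
Definition rokhlin_base (W : set X) N :=
  \bigcup_q first_entrance W (q * N) `\` \bigcup_(i < N) iter i.+1 tau @^-1` W.

Lemma rokhlin_base_iter (W : set X) N y k : (0 < k < N)%N ->
  rokhlin_base W N y -> ~ rokhlin_base W N (iter k tau y).
Proof.
move=> /andP[k0 kN] [[q _ Fq] Ty] [[q' _ Fq'] _].
have Fk : first_entrance W (q * N + k) (iter k tau y).
  apply: first_entrance_tau => // i /andP[i0 ik] Wi; apply: Ty.
  exists i.-1; first by rewrite /= prednK// (leq_trans ik (ltnW kN)).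
  by move: Wi; rewrite -(prednK i0).
have := first_entrance_uniq Fq' Fk => /(congr1 (modn^~ N)).
by rewrite modnMl modnMDl modn_small// => k0'; move: k0; rewrite -k0'.
Qed.

Lemma rokhlin_base_tower (W : set X) N : measurable W -> tower (rokhlin_base W N) N.
Proof.
move=> mW; split.
  apply: measurableD.
    by apply: bigcupT_measurable => q; exact: measurable_first_entrance.
  by apply: bigcup_measurable => i _; exact: measurable_preimage_iter.
have above i j x : (i < j < N)%N ->
    shift i (rokhlin_base W N) x -> ~ shift j (rokhlin_base W N) x.
  move=> /andP[ij jN] Bi Bj; apply: (@rokhlin_base_iter _ _ _ (j - i)) Bj _.
    by rewrite subn_gt0 ij (leq_ltn_trans (leq_subr _ _)).
  by rewrite /shift /= (iter_can_le sigmaK _ _ _ (leq_subr i j)) subKn// ltnW.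
move=> i j /= iN jN [x [Bi Bj]].
case: (ltngtP i j) => // ij; first by case: (above i j x) => //; rewrite ij.
by case: (above j i x) => //; rewrite ij.
Qed.

Lemma rokhlin_base_cover (W : set X) N : (0 < N)%N ->
  \bigcup_j shift j W `<=`
    levels (rokhlin_base W N) 0 N `|` \bigcup_(i < N) iter i.+1 tau @^-1` W.
Proof.
move=> N0 x [j _ Wj]; have [n Fn] := exists_first_entrance Wj.
have [|notBad] := pselect ((\bigcup_(i < N) iter i.+1 tau @^-1` W) x).
  by right.
left; set r := (n %% N)%N; exists r; first exact: ltn_pmod.
rewrite /shift /= addn0; split.
  exists (n %/ N)%N => //.
  have -> : (n %/ N * N = n - r)%N by rewrite {2}(divn_eq n N) addnK.
  exact: first_entrance_sigma (leq_mod n N) Fn.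
move=> [i /= iN] Wi; have {Wi} : W (iter i.+1 tau (iter r sigma x)) := Wi.
case: (leqP i.+1 r) => ir.
  rewrite (iter_can_le sigmaK _ _ _ ir); case: Fn => _ /(_ (r - i.+1)%N); apply.
  by rewrite /= (leq_trans _ (leq_mod n N))// ltn_subrL (leq_trans _ ir).
rewrite (iter_can_ge sigmaK i.+1 r x (ltnW ir)) subSn// => Wi; apply: notBad.
by exists (i - r)%N => //=; rewrite (leq_ltn_trans (leq_subr _ _)).
Qed.

Lemma rokhlin_tower N (th : R) : nonatomic m -> ergodic m tau ->
  (0 < N)%N -> 0 < th -> exists B, tower B N /\ 1 - th <= N%:R * pr m B.
Proof.
move=> na erg N0 th0; have N0' : 0 < N%:R :> R by rewrite ltr0n.
have [W [mW W0 Wth]] := nonatomic_small_set _ na _ (divr_gt0 th0 N0').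
set Bad := \bigcup_(i < N) iter i.+1 tau @^-1` W.
have mBad : measurable Bad.
  by apply: bigcup_measurable => i _; exact: measurable_preimage_iter.
have pr_Bad : pr m Bad <= th.
  apply: le_trans (pr_bigcup_ord_le m _ N
    (fun i => measurable_preimage_iter _ i.+1 _ mtau mW)) _.
  under eq_bigr do rewrite pr_preimage_iter//.
  by rewrite sumr_const card_ord -mulr_natl; rewrite ler_pdivlMr// in Wth; lra.
have tB := rokhlin_base_tower W N mW.
exists (rokhlin_base W N); split => //.
have mU : measurable (\bigcup_j shift j W).
  by apply: bigcupT_measurable => j; exact: measurable_shift.
have mL : measurable (levels (rokhlin_base W N) 0 N).
  by apply: measurable_levels; case: tB.
have := le_pr m _ _ mU (measurableU _ _ mL mBad) (rokhlin_base_cover W N N0).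
rewrite ergodic_sweepout// => /le_trans/(_ (prU2 m _ _ mL mBad)).
rewrite (pr_levels _ _ tB) ?addn0//; lra.
Qed.

Section TowerComplement.
Variables (p : nat) (M : nat -> nat) (B : nat -> set X).
Hypothesis p_gt2 : (2 < p)%N.
Let P : R := p%:R.
Let c i : R := (2 ^ i.+1)%:R.
Let N i := (p * 2 ^ i.+1 * M i)%N.
Let L i := ((p - 1) * M i)%N.
Hypotheses (towerB : forall i, tower (B i) (N i))
  (B_large : forall i, 1 - P^-1 <= (N i)%:R * pr m (B i)).

Let D := \bigcup_i levels (B i) 0 (L i).
Let E := ~` D.

Let P_gt2 : 2 < P. Proof. by rewrite ltr_nat. Qed.
Let P_gt0 : 0 < P. Proof. by rewrite ltr0n ltnW// ltnW. Qed.
Let PV : P * P^-1 = 1. Proof. exact: mulfV (lt0r_neq0 P_gt0). Qed.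
Let c_gt0 i : 0 < c i. Proof. by rewrite ltr0n expn_gt0. Qed.
Let NE i : (N i)%:R = P * c i * (M i)%:R. Proof. by rewrite !natrM. Qed.
Let LE i : (L i)%:R = (P - 1) * (M i)%:R.
Proof. by rewrite natrM natrB// ltnW// ltnW. Qed.

Let measurable_B i : measurable (B i). Proof. by case: (towerB i). Qed.

Let LN i : (L i <= N i)%N.
Proof.
rewrite /L /N leq_mul2r (leq_trans (leq_subr 1 p)) ?orbT//.
by rewrite leq_pmulr// expn_gt0.
Qed.

Lemma pr_low_levels i : pr m (levels (B i) 0 (L i)) <= (1 - P^-1) / c i.
Proof.
have B_le1 : (N i)%:R * pr m (B i) <= 1.
  rewrite -(pr_levels 0 (N i) (towerB i)) ?addn0//.
  by apply: pr_le1; exact: measurable_levels.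
rewrite (pr_levels 0 (L i) (towerB i)) ?addn0// ler_pdivlMr// LE.
move: B_le1; rewrite NE; set x := (M i)%:R * pr m (B i) * c i.
have -> : P * c i * (M i)%:R * pr m (B i) = P * x by rewrite /x; ring.
have -> : (P - 1) * (M i)%:R * pr m (B i) * c i = (P - 1) * x by rewrite /x; ring.
move=> Px; have : x <= P^-1 by rewrite -(ler_pM2l P_gt0) PV.
have := PV; have := P_gt2; nra.
Qed.

Lemma measure_D : (m D <= (1 - P^-1)%:E)%E.
Proof.
have mL i : measurable (levels (B i) 0 (L i)) by exact: measurable_levels.
apply: le_trans (measure_sigma_subadditive m mL _ (@subset_refl _ D)) _.
  exact: bigcupT_measurable.
apply: le_trans (epsilon_trick0 _ _) => //.
  apply: lee_nneseries => [i _ _|i _]; first exact: measure_ge0.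
  have := pr_low_levels i; rewrite -lee_fin -prE; last exact: mL.
  by move=> h; exact: h.
by rewrite subr_ge0 invf_le1//; have := P_gt2; lra.
Qed.

Lemma measurable_E : measurable E.
Proof.
by apply: measurableC; apply: bigcupT_measurable => i; exact: measurable_levels.
Qed.

Lemma measure_E_gt0 : (0 < m E)%E.
Proof.
have mD : measurable D by rewrite -[D]setCK; exact: measurableC measurable_E.
suff : 0 < pr m E by rewrite (prE _ _ measurable_E) lte_fin.
rewrite /E -(setTD D) prD ?prT//.
have := measure_D; rewrite prE// lee_fin; have : 0 < P^-1 by rewrite invr_gt0.
lra.
Qed.

Lemma high_levels_avoid_E i n :
  \bigcup_(k in [set k | (1 <= k <= n)%N]) shift k E `<=` ~` levels (B i) n (L i - n).
Proof.
move=> x [k /= /andP[_ kn] Ex] [j /= jL Bx]; apply: Ex.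
exists i => //; exists (j + n - k)%N => /=.
  by rewrite (leq_ltn_trans (leq_subr _ _))// addnC -ltn_subRL.
by rewrite /shift /= addn0 -iterD subnK// (leq_trans kn (leq_addl _ _)).
Qed.

Lemma pr_high_levels i n : (n < M i)%N ->
  (P - 3) / (P * c i) <= pr m (levels (B i) n (L i - n)).
Proof.
move=> nM; have nL : (n <= L i)%N.
  by rewrite /L (leq_trans (ltnW nM))// leq_pmull// subn_gt0 ltnW.
rewrite (pr_levels n (L i - n) (towerB i)); last by rewrite subnK// LN.
have Ln : (P - 2) * (M i)%:R <= (L i - n)%:R.
  rewrite -(@natrB _ p 2) ?(ltnW p_gt2)// -natrM ler_nat.
  by rewrite /L -(subnSK (ltnW p_gt2)) mulSn addnC -addnBA ?leq_addr// ltnW.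
have Pc : 0 < P * c i by rewrite mulr_gt0.
rewrite ler_pdivrMr//; apply: le_trans (_ : (P - 2) * ((N i)%:R * pr m (B i)) <= _).
  have := B_large i; have : 0 < P^-1 by rewrite invr_gt0.
  have := PV; have := P_gt2; nra.
rewrite NE (_ : _ * (_ * pr m (B i)) = (P - 2) * (M i)%:R * pr m (B i) * (P * c i)).
  by apply: ler_wpM2r; [exact: ltW | apply: ler_wpM2r; [exact: pr_ge0 | exact: Ln]].
by ring.
Qed.

Lemma measure_images_E i n : (n < M i)%N ->
  (m (\bigcup_(k in [set k | (1 <= k <= n)%N]) (iter k tau @` E))
    <= (1 - (P - 3) / (P * c i))%:E)%E.
Proof.
move=> nM; rewrite (eq_bigcupr (fun k _ => image_iter k E)).
have mU : measurable (\bigcup_(k in [set k | (1 <= k <= n)%N]) shift k E).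
  by apply: bigcup_measurable => k _; exact: measurable_shift measurable_E.
have mH := measurable_levels (B i) n (L i - n) (measurable_B i).
rewrite (prE _ _ mU) lee_fin.
apply: le_trans (le_pr m _ _ mU (measurableC mH) (high_levels_avoid_E i n)) _.
by rewrite -setTD prD ?prT//; have := pr_high_levels i n nM; lra.
Qed.

End TowerComplement.

Lemma exists_set_with_bounded_images p (M : nat -> nat) :
  nonatomic m -> ergodic m tau -> (2 < p)%N -> (forall i, (0 < M i)%N) ->
  exists E : set X, [/\ measurable E, (0 < m E)%E & forall i n, (n < M i)%N ->
    (m (\bigcup_(k in [set k | (1 <= k <= n)%N]) (iter k tau @` E))
      <= (1 - (p%:R - 3) / (p%:R * (2 ^ i.+1)%:R))%:E)%E].
Proof.
move=> na erg p_gt2 M_gt0.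
have towers i : exists B, tower B (p * 2 ^ i.+1 * M i) /\
    1 - p%:R^-1 <= (p * 2 ^ i.+1 * M i)%:R * pr m B.
  apply: rokhlin_tower => //; last by rewrite invr_gt0 ltr0n ltnW// ltnW.
  by rewrite !muln_gt0 expn_gt0 M_gt0 andbT ltnW// ltnW.
have [B /all_and2[towerB B_large]] := choice towers.
exists (~` \bigcup_i levels (B i) 0 ((p - 1) * M i)); split.
- exact: measurable_E _ _ _ towerB.
- exact: measure_E_gt0 _ _ _ p_gt2 towerB.
- exact: measure_images_E _ _ _ p_gt2 towerB B_large.
Qed.

End InvertibleMeasurePreserving.

Lemma exists_thresholds (R : numDomainType) (u kap : nat -> R) :
  (forall n, (1 <= n)%N -> u n <= kap 0%N) ->
  (forall i, exists K, forall n, (K <= n)%N -> u n < kap i.+1) ->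
  exists M : nat -> nat, (forall i, (0 < M i)%N) /\
    forall n, (1 <= n)%N -> exists2 i, (n < M i)%N & u n <= kap i.
Proof.
move=> u0 uK; have [K HK] := choice uK.
exists (fun i => maxn (K i) i.+1); split => [i|n n1]; first by rewrite leq_max orbT.
have exi : exists i, (n < maxn (K i) i.+1)%N by exists n; rewrite leq_max ltnSn orbT.
have [[|j] nj jmin] := find_ex_minn exi; first by exists 0%N => //; exact: u0.
exists j.+1 => //; apply/ltW/HK.
have : ~~ (n < maxn (K j) j.+1)%N by apply/negP => /jmin; rewrite ltnn.
by rewrite -leqNgt geq_max => /andP[].
Qed.

Lemma exists_ratio (R : archiRealFieldType) (a : R) : a < 1 / 2 ->
  exists p : nat, (3 < p)%N /\ a <= (p%:R - 3) / (p%:R * 2).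
Proof.
move=> a2; have a2' : 0 < 1 - 2 * a by lra.
set t := 3 / (1 - 2 * a); exists (Num.truncn t).+4; split => //.
have : t < (Num.truncn t).+4%:R.
  by apply: (lt_le_trans (truncnS_gt _)); rewrite ler_nat; do 3 apply: leqW.
rewrite ltr_pdivrMr// ler_pdivlMr ?mulr_gt0//; lra.
Qed.

Theorem mainTheorem7 (R : realType) (d : measure_display) (X : measurableType d)
  (m : probability X R) (tau : X -> X) (eps : nat -> R) :
  @standard_borel R d X ->
  nonatomic m ->
  invertible_mp m tau ->
  ergodic m tau ->
  (forall n, (1 <= n)%N -> 0 < eps n < 1 / 2) ->
  (forall n, (1 <= n)%N -> eps n.+1 <= eps n) ->
  eps @ \oo --> 0 ->
  exists E : set X, [/\ measurable E, (0 < m E)%E &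
    forall n, (1 <= n)%N ->
      (m (\bigcup_(k in [set k | (1 <= k <= n)%N]) (iter k tau @` E))
        <= (1 - eps n)%:E)%E].
Proof.
move=> _ na [sigma [mtau msigma tauK sigmaK tau_mp]] erg eps_bd eps_dec eps_cvg.
have eps_le1 n : (1 <= n)%N -> eps n <= eps 1%N.
  elim: n => // n IH _; case: (posnP n) => [->//|n0].
  exact: le_trans (eps_dec _ n0) (IH n0).
have [p [p_gt3 eps1]] : exists p, (3 < p)%N /\ eps 1%N <= (p%:R - 3) / (p%:R * 2).
  by apply: exists_ratio; have /andP[] := eps_bd 1%N erefl.
pose kap i : R := (p%:R - 3) / (p%:R * (2 ^ i.+1)%:R).
have kap_gt0 i : 0 < kap i.
  have p0 : (0 < p)%N by rewrite (leq_trans _ p_gt3).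
  by rewrite divr_gt0 ?mulr_gt0 ?ltr0n ?expn_gt0// subr_gt0 ltr_nat.
have [n n1|i|M [M_gt0 epsM]] := @exists_thresholds _ eps kap.
- by rewrite (le_trans (eps_le1 n n1))// /kap expn1.
- have [K _ HK] := (cvgr0Pnorm_lt eps).1 eps_cvg _ (kap_gt0 i.+1).
  by exists K => n /HK; apply: le_lt_trans (ler_norm _).
have [E [mE E0 hE]] :=
  exists_set_with_bounded_images m _ _ mtau msigma tauK sigmaK tau_mp _ _ na erg
    (ltnW p_gt3) M_gt0.
exists E; split => // n n1; have [i ni epsk] := epsM n n1.
by apply: le_trans (hE i n ni) _; rewrite lee_fin lerB.
Qed.
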